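(* Let $\sigma\in S_n$ and let $f_\sigma=x_1\cdots x_n-x_{\sigma(1)}\cdots x_{\sigma(n)}$ in the free associative algebra. For $i\in\{1,\dots,n\}$ let $T_i(f_\sigma)=f_\sigma(x_1,\dots,x_{i-1},x_ix_{i+1},x_{i+2},\dots,x_{n+1})$. Then $T_i(f_\sigma)=x_1\cdots x_{n+1}-x_{\tau(1)}\cdots x_{\tau(n+1)}$ where $\tau=\hat s_{i+1}\,\sigma\,\hat s_{\sigma^{-1}(i)+1}^{-1}\in S_{n+1}$, with $\sigma$ regarded as the element of $S_{n+1}$ fixing $n+1$.
   Context: For $1\le m\le n+1$, $\hat s_m\in S_{n+1}$ denotes the cycle $(m,m+1,\ldots,n+1)$ (so $\hat s_{n+1}$ is the identity). Products of permutations are compositions of functions. *)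

From HB Require Import structures.
From mathcomp Require Import all_boot all_order all_algebra all_fingroup.
From mathcomp Require Import zify.
Set Implicit Arguments. Unset Strict Implicit. Unset Printing Implicit Defensive.
Import GRing.Theory.
Local Open Scope ring_scope.

(* Conventions: indices are 0-based.  The variable x_j (1 <= j <= N) of the paper
   is index j-1 : 'I_N here. *)

(* The cycle  \hat s_m = (m, m+1, ..., n+1)  in S_{n+1}, for 1 <= m <= n+1.
   Here m0 : 'I_n.+1 is the 0-based version m0 = m - 1, so (0-based)
   k |-> k for k < m0,  k |-> k+1 for m0 <= k < n,  n |-> m0. *)
Definition hat_s_fun (n : nat) (m0 : 'I_n.+1) (k : 'I_n.+1) : 'I_n.+1 :=
  if (k < m0)%N then k else if (k < n)%N then inord k.+1 else m0.

Lemma hat_s_inj (n : nat) (m0 : 'I_n.+1) : injective (hat_s_fun m0).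
Proof.
move=> a b; rewrite /hat_s_fun.
have ha := ltn_ord a; have hb := ltn_ord b; have hm := ltn_ord m0.
case: (ltnP a m0) => h1; case: (ltnP b m0) => h2;
case: (ltnP a n) => h3; case: (ltnP b n) => h4 => E; apply/val_inj => //=;
move/(congr1 val): E => /=; rewrite ?inordK //; lia.
Qed.

Definition hat_s (n : nat) (m0 : 'I_n.+1) : 'S_n.+1 := perm (@hat_s_inj n m0).

Definition ext_perm (n : nat) (s : 'S_n) : 'S_n.+1 := lift_perm ord_max ord_max s.

(* The permutation tau = \hat s_{i+1} o sigma o (\hat s_{sigma^{-1}(i)+1})^{-1}
   (composition of functions), for the 1-based index i = i0 + 1.
   \hat s_{i+1} has 0-based parameter i = i0+1 = lift ord0 i0, and
   \hat s_{sigma^{-1}(i)+1} has 0-based parameter sigma^{-1}(i) (1-based) = s^-1 i0 + 1. *)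
Definition tau (n : nat) (s : 'S_n) (i0 : 'I_n) (k : 'I_n.+1) : 'I_n.+1 :=
  hat_s (lift ord0 i0) (ext_perm s (((hat_s (lift ord0 (s^-1 i0)))^-1)%g k)).

Definition f_sigma (A : nzRingType) (n : nat) (s : 'S_n) (y : 'I_n -> A) : A :=
  \prod_(j < n) y j - \prod_(j < n) y (s j).

Definition Ti_args (A : nzRingType) (n : nat) (i0 : 'I_n) (x : 'I_n.+1 -> A)
  (j : 'I_n) : A :=
  if (j < i0)%N then x (widen_ord (leqnSn n) j)
  else if j == i0 then x (widen_ord (leqnSn n) j) * x (lift ord0 j)
  else x (lift ord0 j).

(* T_i replaces each x_j by a word w_j (x_j, x_i x_{i+1} or x_{j+1}), and
   w_1 ... w_n = x_1 ... x_{n+1}.  Let m = sigma^-1(i) and let w'_j be the words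
   of T_m.  Then tau maps the letters of w'_j, in order, onto those of
   w_{sigma(j)}: it sends m, m+1 to i, i+1 and elsewhere acts as sigma after
   deleting the position m+1 and inserting the position i+1.  Hence
   x_{tau(1)} ... x_{tau(n+1)} = w_{sigma(1)} ... w_{sigma(n)}. *)
From HB Require Import structures.
From mathcomp Require Import all_boot all_order all_algebra all_fingroup.
From mathcomp Require Import zify.
Set Implicit Arguments. Unset Strict Implicit. Unset Printing Implicit Defensive.
Import GRing.Theory.
Local Open Scope ring_scope.

(* 0-based indices of w_j; the first letter lift (lift ord0 i) j is j for
   j <= i and j + 1 for j > i. *)
Definition Ti_word (n : nat) (i j : 'I_n) : seq 'I_n.+1 :=
  lift (lift ord0 i) j :: (if j == i then [:: lift ord0 i] else [::]).

Lemma Ti_word_lift0 (n : nat) (i j : 'I_n) :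
  Ti_word (lift ord0 i) (lift ord0 j) = map (lift ord0) (Ti_word i j).
Proof.
rewrite /Ti_word (inj_eq lift_inj) /=.
have lift_comm : lift (lift ord0 (lift ord0 i)) (lift ord0 j)
                 = lift ord0 (lift (lift ord0 i) j) :> 'I_n.+2.
  by apply: val_inj; rewrite /= /bump; lia.
by rewrite lift_comm; case: eqP.
Qed.

Section OrderedBigop.

Variables (R : Type) (idx : R) (op : Monoid.law idx).

Lemma big_Ti_word (n : nat) (i : 'I_n) (F : 'I_n.+1 -> R) :
  \big[op/idx]_(j < n) \big[op/idx]_(k <- Ti_word i j) F k
  = \big[op/idx]_(k < n.+1) F k.
Proof.
elim: n i F => [|n IH] i F; first by case: i.
rewrite big_ord_recl [RHS]big_ord_recl.
case: (unliftP ord0 i) => [i'|] ->.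
  have -> : Ti_word (lift ord0 i') ord0 = [:: ord0].
    by rewrite /Ti_word; congr [:: _]; apply: val_inj.
  by rewrite big_seq1; under eq_bigr do rewrite Ti_word_lift0 big_map; rewrite IH.
have -> : Ti_word ord0 ord0 = [:: ord0; lift ord0 ord0] :> seq 'I_n.+2.
  by rewrite /Ti_word eqxx; congr [:: _; _]; apply: val_inj.
have word_lift (j : 'I_n) :
    Ti_word ord0 (lift ord0 j) = [:: lift ord0 (lift ord0 j)] :> seq 'I_n.+2.
  by rewrite /Ti_word eq_sym (negbTE (neq_lift _ _)); congr [:: _]; apply: val_inj.
rewrite big_cons big_seq1 -Monoid.mulmA big_ord_recl.
by under eq_bigr do rewrite word_lift big_seq1.
Qed.

End OrderedBigop.

Lemma Ti_args_word (A : nzRingType) (n : nat) (i0 j : 'I_n) (x : 'I_n.+1 -> A) :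
  Ti_args i0 x j = \prod_(k <- Ti_word i0 j) x k.
Proof.
rewrite /Ti_args /Ti_word big_cons -val_eqE /=.
case: ltngtP => [lt_j_i0 | lt_i0_j | /val_inj ->]; rewrite ?big_nil ?mulr1 ?big_seq1;
  [congr x | congr x | congr (x _ * _)]; by apply: val_inj; rewrite /= /bump; lia.
Qed.

Lemma hat_s_lift_max (n : nat) (m0 : 'I_n.+1) (j : 'I_n) :
  hat_s m0 (lift ord_max j) = lift m0 j.
Proof.
have lt_m0_Sn := ltn_ord m0; have lt_j_n := ltn_ord j.
have lift_max_val : (lift ord_max j : nat) = j by rewrite /= /bump leqNgt lt_j_n.
apply: val_inj; rewrite /hat_s permE /hat_s_fun lift_max_val /= /bump.
by repeat case: ifP => ?; rewrite ?inordK; lia.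
Qed.

Lemma hat_s_max (n : nat) (m0 : 'I_n.+1) : hat_s m0 ord_max = m0.
Proof. by rewrite /hat_s permE /hat_s_fun /= ltnNge -ltnS ltn_ord ltnn. Qed.

Lemma hat_sV_lift (n : nat) (m0 : 'I_n.+1) (j : 'I_n) :
  ((hat_s m0)^-1)%g (lift m0 j) = lift ord_max j.
Proof. by rewrite -hat_s_lift_max permK. Qed.

Lemma hat_sV_self (n : nat) (m0 : 'I_n.+1) : ((hat_s m0)^-1)%g m0 = ord_max.
Proof. by rewrite -{2}(hat_s_max m0) permK. Qed.

Section Tau.

Variables (n : nat) (s : 'S_n) (i0 : 'I_n).

Lemma tau_lift (j : 'I_n) :
  tau s i0 (lift (lift ord0 (s^-1 i0)%g) j) = lift (lift ord0 i0) (s j).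
Proof. by rewrite /tau hat_sV_lift /ext_perm lift_perm_lift hat_s_lift_max. Qed.

Lemma tau_lift0 : tau s i0 (lift ord0 (s^-1 i0)%g) = lift ord0 i0.
Proof. by rewrite /tau hat_sV_self /ext_perm lift_perm_id hat_s_max. Qed.

Lemma map_tau_Ti_word (j : 'I_n) :
  map (tau s i0) (Ti_word (s^-1 i0)%g j) = Ti_word i0 (s j).
Proof.
rewrite /Ti_word /= tau_lift -(inj_eq (@perm_inj _ s)) permKV.
by case: eqP => //= _; rewrite tau_lift0.
Qed.

End Tau.

Theorem lemma2p6 (A : nzRingType) (n : nat) (s : 'S_n) (i0 : 'I_n)
    (x : 'I_n.+1 -> A) :
  f_sigma s (Ti_args i0 x) =
  \prod_(k < n.+1) x k - \prod_(k < n.+1) x (tau s i0 k).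
Proof.
rewrite /f_sigma -(big_Ti_word _ i0 x).
rewrite -(big_Ti_word _ (s^-1 i0)%g (fun k => x (tau s i0 k))).
congr (_ - _); apply: eq_bigr => j _; first exact: Ti_args_word.
by rewrite Ti_args_word -map_tau_Ti_word big_map.
Qed.
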